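(* Let $\rho_{AB},\tau_{AB}\in\mathcal{S}_{\leq}(\mathcal{H}_A\otimes\mathcal{H}_B)$, $d_A=\dim\mathcal{H}_A$, $d_{\min}=\min\{d_A,\dim\mathcal{H}_B\}$, and $\delta:=\bar D(\rho_{AB},\tau_{AB})$. Then $$\big|H_{\min}(A|B)_\rho-H_{\min}(A|B)_\tau\big|\leq\frac{d_A\,d_{\min}\,\delta}{\ln 2\cdot\min\{\mathrm{tr}\,\rho_{AB},\mathrm{tr}\,\tau_{AB}\}}.$$
   Context: Hilbert spaces finite-dimensional; $\mathcal{S}_=(\mathcal{H})$: normalized states; $\mathcal{S}_{\leq}(\mathcal{H})=\{\rho\geq0:0<\mathrm{tr}\,\rho\leq1\}$. Logs base 2. $H_{\min}(A|B)_\rho=\max_{\sigma_B\in\mathcal{S}_=(\mathcal{H}_B)}\sup\{\lambda : 2^{-\lambda}\mathbb{1}_A\otimes\sigma_B\geq\rho_{AB}\}$. Generalized trace distance $\bar D(\rho,\tau)=\max\{\mathrm{tr}\{\rho-\tau\}_+,\mathrm{tr}\{\tau-\rho\}_+\}$, with $\{X\}_+$ the positive part of $X$. *)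

From mathcomp Require Import all_boot all_order all_algebra.
From mathcomp Require Import sesquilinear spectral.
From mathcomp Require Import boolp classical_sets reals ereal exp.
From mathcomp.real_closed Require Import complex mxtens.

Set Implicit Arguments.
Unset Strict Implicit.
Unset Printing Implicit Defensive.

Import Order.TTheory GRing.Theory Num.Theory.
Local Open Scope ring_scope.
Local Open Scope classical_set_scope.

Section QuantumDefs.
Variable R : realType.
Local Notation C := R[i].

Definition adjmx m n (A : 'M[C]_(m, n)) : 'M[C]_(n, m) := (map_mx Num.conj A)^T.

(* positive semidefinite operator: Hermitian with nonnegative quadratic form
   (in the partial order of C, 0 <= z means z is real and nonnegative) *)
Definition psdmx n (A : 'M[C]_n) : Prop :=
  A \is hermsymmx /\ forall v : 'rV[C]_n, 0 <= (v *m A *m adjmx v) 0 0.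

Definition loewner_le n (A B : 'M[C]_n) : Prop := psdmx (B - A).

(* real-valued trace (the trace of a Hermitian matrix is real) *)
Definition trR n (A : 'M[C]_n) : R := complex.Re (\tr A).

Definition subnormalized n (rho : 'M[C]_n) : Prop :=
  psdmx rho /\ 0 < trR rho /\ trR rho <= 1.

Definition normalized n (sigma : 'M[C]_n) : Prop :=
  psdmx sigma /\ \tr sigma = 1.

(* positive part {X}_+ of a Hermitian (hence normal) matrix X, via its
   spectral decomposition X = U^-1 diag(d) U (U unitary):
   {X}_+ = U^-1 diag(max(d_i,0)) U *)
Definition posPart n (X : 'M[C]_n) : 'M[C]_n :=
  let U := spectralmx X in
  invmx U *m diag_mx (map_mx (fun z : C => (Num.max (complex.Re z) 0)%:C%C)
                             (spectral_diag X)) *m U.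

Definition gen_trace_dist n (rho tau : 'M[C]_n) : R :=
  Num.max (trR (posPart (rho - tau))) (trR (posPart (tau - rho))).

Definition Hmin (dA dB : nat) (rho : 'M[C]_(dA * dB)) : \bar R :=
  ereal_sup
    [set ereal_sup
           [set l%:E | l in
              [set l : R | loewner_le rho
                 (((2 : R) `^ (- l))%:C%C *: ((1%:M : 'M[C]_dA) *t sigma))]]
    | sigma in [set sigma : 'M[C]_dB | normalized sigma]].

End QuantumDefs.

Arguments Hmin {R} dA dB rho.

From mathcomp Require Import all_boot all_order all_algebra ring lra.
From mathcomp Require Import sesquilinear spectral.
From mathcomp Require Import boolp classical_sets reals ereal exp.
From mathcomp.real_closed Require Import complex mxtens.

Set Implicit Arguments.
Unset Strict Implicit.
Unset Printing Implicit Defensive.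

Import Order.TTheory GRing.Theory Num.Theory.
Local Open Scope ring_scope.

(* Let c (1_A (x) sigma) >= tau with sigma a state and c = 2^-l, and let
   P = {rho - tau}_+, so that rho <= tau + P and tr P <= delta.  P is
   dominated by 1_A (x) Q with Q >= 0 and tr Q <= d_min tr P: by
   Cauchy-Schwarz over the d_A blocks, P <= d_A (1_A (x) tr_A P), and
   P <= (tr P) 1 anyway.  Normalizing c sigma + Q, padded to trace
   c + d_min delta, shows that -log (c + d_min delta) is feasible for rho.
   As log (c + x) - log c <= x / (c ln 2) and c >= tr tau / d_A, this is at
   least l minus the stated bound; exchanging rho and tau gives the rest. *)

Section Adjoint.
Variable R : realType.
Local Notation C := R[i].

Lemma adjmxE m n (A : 'M[C]_(m, n)) i j : adjmx A i j = (A j i)^*.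
Proof. by rewrite /adjmx !mxE. Qed.

Lemma adjmxD m n (A B : 'M[C]_(m, n)) : adjmx (A + B) = adjmx A + adjmx B.
Proof. by apply/matrixP=> i j; rewrite !(mxE, adjmxE) rmorphD. Qed.

Lemma adjmxN m n (A : 'M[C]_(m, n)) : adjmx (- A) = - adjmx A.
Proof. by apply/matrixP=> i j; rewrite !(mxE, adjmxE) rmorphN. Qed.

Lemma adjmxB m n (A B : 'M[C]_(m, n)) : adjmx (A - B) = adjmx A - adjmx B.
Proof. by rewrite adjmxD adjmxN. Qed.

Lemma adjmxZ m n c (A : 'M[C]_(m, n)) : adjmx (c *: A) = c^* *: adjmx A.
Proof. by apply/matrixP=> i j; rewrite !(mxE, adjmxE) rmorphM. Qed.

Lemma adjmxK m n (A : 'M[C]_(m, n)) : adjmx (adjmx A) = A.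
Proof. by apply/matrixP=> i j; rewrite !adjmxE conjCK. Qed.

Lemma adjmxM m n p (A : 'M[C]_(m, n)) (B : 'M[C]_(n, p)) :
  adjmx (A *m B) = adjmx B *m adjmx A.
Proof.
apply/matrixP=> i j; rewrite !(mxE, adjmxE) rmorph_sum; apply: eq_bigr => k _.
by rewrite !adjmxE rmorphM mulrC.
Qed.

Lemma adjmx_sum m n I (r : seq I) (P : pred I) (F : I -> 'M[C]_(m, n)) :
  adjmx (\sum_(i <- r | P i) F i) = \sum_(i <- r | P i) adjmx (F i).
Proof.
apply/matrixP=> i j; rewrite adjmxE !summxE rmorph_sum; apply: eq_bigr => k _.
by rewrite adjmxE.
Qed.

Lemma adjmx1 n : adjmx (1%:M : 'M[C]_n) = 1%:M.
Proof.
apply/matrixP=> i j; rewrite adjmxE !mxE eq_sym.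
by case: eqP; rewrite ?conjC1 ?conjC0.
Qed.

Lemma adjmx_tens m n p q (A : 'M[C]_(m, n)) (B : 'M[C]_(p, q)) :
  adjmx (A *t B) = adjmx A *t adjmx B.
Proof. by apply/matrixP=> i j; rewrite !(adjmxE, mxE) rmorphM. Qed.

Lemma conj_realC (c : R) : (c%:C%C : C)^* = c%:C%C.
Proof. exact: conjc_real. Qed.

Lemma hermsymmx_adjE n (M : 'M[C]_n) : (M \is hermsymmx) = (adjmx M == M).
Proof. by rewrite is_hermitianmxE expr0 scale1r /adjmx map_trmx eq_sym. Qed.

Lemma hermsymmx_adj n (M : 'M[C]_n) : M \is hermsymmx -> adjmx M = M.
Proof. by rewrite hermsymmx_adjE => /eqP. Qed.

End Adjoint.

Section Positive.
Variable R : realType.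
Local Notation C := R[i].

Definition mxform n (u v : 'rV[C]_n) (M : 'M[C]_n) : C := (u *m M *m adjmx v) 0 0.

Lemma mxformE n (u v : 'rV[C]_n) M :
  mxform u v M = \sum_i \sum_j u 0 i * M i j * (v 0 j)^*.
Proof.
rewrite /mxform mxE exchange_big /=; apply: eq_bigr => j _.
by rewrite mxE adjmxE mulr_suml; apply: eq_bigr => i _; rewrite ?mxE.
Qed.

Lemma mxformDl n (u u' v : 'rV[C]_n) M :
  mxform (u + u') v M = mxform u v M + mxform u' v M.
Proof. by rewrite /mxform !mulmxDl mxE. Qed.

Lemma mxformDr n (u v v' : 'rV[C]_n) M :
  mxform u (v + v') M = mxform u v M + mxform u v' M.
Proof. by rewrite /mxform adjmxD mulmxDr mxE. Qed.

Lemma mxformNl n (u v : 'rV[C]_n) M : mxform (- u) v M = - mxform u v M.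
Proof. by rewrite /mxform !mulNmx mxE. Qed.

Lemma mxformNr n (u v : 'rV[C]_n) M : mxform u (- v) M = - mxform u v M.
Proof. by rewrite /mxform adjmxN mulmxN mxE. Qed.

Lemma mxform_suml n I (r : seq I) (P : pred I) (F : I -> 'rV[C]_n) v M :
  mxform (\sum_(i <- r | P i) F i) v M = \sum_(i <- r | P i) mxform (F i) v M.
Proof. by rewrite /mxform !mulmx_suml summxE. Qed.

Lemma mxform_sumr n I (r : seq I) (P : pred I) (F : I -> 'rV[C]_n) u M :
  mxform u (\sum_(i <- r | P i) F i) M = \sum_(i <- r | P i) mxform u (F i) M.
Proof. by rewrite /mxform adjmx_sum mulmx_sumr summxE. Qed.

Lemma mxformD n (u v : 'rV[C]_n) M N :
  mxform u v (M + N) = mxform u v M + mxform u v N.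
Proof. by rewrite /mxform mulmxDr mulmxDl mxE. Qed.

Lemma mxformN n (u v : 'rV[C]_n) M : mxform u v (- M) = - mxform u v M.
Proof. by rewrite /mxform mulmxN mulNmx mxE. Qed.

Lemma mxformZ n (u v : 'rV[C]_n) c M : mxform u v (c *: M) = c * mxform u v M.
Proof. by rewrite /mxform -scalemxAr -scalemxAl mxE. Qed.

Lemma psdmxD n (A B : 'M[C]_n) : psdmx A -> psdmx B -> psdmx (A + B).
Proof.
move=> [hA pA] [hB pB]; split.
  by rewrite hermsymmx_adjE adjmxD (hermsymmx_adj hA) (hermsymmx_adj hB).
by move=> v; rewrite -[X in 0 <= X]/(mxform v v _) mxformD; exact: addr_ge0 (pA v) (pB v).
Qed.

Lemma psdmxZ n (c : R) (A : 'M[C]_n) : 0 <= c -> psdmx A -> psdmx (c%:C%C *: A).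
Proof.
move=> c0 [hA pA]; split.
  by rewrite hermsymmx_adjE adjmxZ (hermsymmx_adj hA) conj_realC.
move=> v; rewrite -[X in 0 <= X]/(mxform v v _) mxformZ.
by apply: mulr_ge0; [rewrite ler0c | exact: pA].
Qed.

Lemma psdmx1 n : psdmx (1%:M : 'M[C]_n).
Proof.
split; first by rewrite hermsymmx_adjE adjmx1.
move=> v; rewrite mulmx1 mxE; apply: sumr_ge0 => j _.
by rewrite adjmxE mulcJ_ge0.
Qed.

Lemma loewner_le_trans n (A B D : 'M[C]_n) :
  loewner_le A B -> loewner_le B D -> loewner_le A D.
Proof. by move=> AB BD; have := psdmxD BD AB; rewrite addrA subrK. Qed.

Lemma loewner_leD n (A B A' B' : 'M[C]_n) :
  loewner_le A B -> loewner_le A' B' -> loewner_le (A + A') (B + B').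
Proof. by move=> AB AB'; have := psdmxD AB AB'; rewrite /loewner_le opprD addrACA. Qed.

Lemma psdmx_diag_ge0 n (M : 'M[C]_n) i : psdmx M -> 0 <= M i i.
Proof.
move=> [_ pM]; have := pM (delta_mx 0 i).
rewrite -[X in 0 <= X -> _]/(mxform _ _ M) mxformE.
rewrite (bigD1 i) //= [X in _ + X]big1 => [|j ji]; last first.
  by rewrite big1 // => k _; rewrite !mxE (negbTE ji) andbF !mul0r.
rewrite addr0 (bigD1 i) //= [X in _ + X]big1 => [|j ji]; last first.
  by rewrite !mxE (negbTE ji) andbF conjC0 mulr0.
by rewrite addr0 !mxE !eqxx /= mul1r conjC1 mulr1.
Qed.

Lemma psdmx_tr_ge0 n (M : 'M[C]_n) : psdmx M -> 0 <= \tr M.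
Proof. by move=> pM; apply: sumr_ge0 => i _; exact: psdmx_diag_ge0. Qed.

Lemma psdmx_trR n (M : 'M[C]_n) : psdmx M -> \tr M = (trR M)%:C%C.
Proof. by move=> /psdmx_tr_ge0/ger0_real/RRe_real. Qed.

Lemma psdmx_trR_ge0 n (M : 'M[C]_n) : psdmx M -> 0 <= trR M.
Proof. by move=> pM; rewrite -ler0c -psdmx_trR ?psdmx_tr_ge0. Qed.

Lemma trRD n (A B : 'M[C]_n) : trR (A + B) = trR A + trR B.
Proof. by rewrite /trR mxtraceD; case: (\tr A); case: (\tr B). Qed.

Lemma trRB n (A B : 'M[C]_n) : trR (A - B) = trR A - trR B.
Proof. by rewrite /trR linearB /=; case: (\tr A); case: (\tr B). Qed.

Lemma trRZ n c (A : 'M[C]_n) : trR (c%:C%C *: A) = c * trR A.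
Proof. by rewrite /trR mxtraceZ; case: (\tr A) => a b /=; rewrite mul0r subr0. Qed.

Lemma trR1 n : trR (1%:M : 'M[C]_n) = n%:R.
Proof. by rewrite /trR mxtrace1 -(rmorph_nat (real_complex R)). Qed.

Lemma normalized_trR n (sigma : 'M[C]_n) : normalized sigma -> trR sigma = 1.
Proof. by case=> _ tr1; rewrite /trR tr1. Qed.

(* Expand the sum of the nonnegative terms mxform (u a - u a') over all pairs. *)
Lemma mxform_sum_le m n (P : 'M[C]_n) (u : 'I_m -> 'rV[C]_n) : psdmx P ->
  mxform (\sum_a u a) (\sum_a u a) P <= m%:R * \sum_a mxform (u a) (u a) P.
Proof.
move=> [_ pP]; set S := \sum_a mxform (u a) (u a) P.
set T := mxform (\sum_a u a) (\sum_a u a) P.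
have eT : T = \sum_a \sum_a' mxform (u a) (u a') P.
  by rewrite /T mxform_suml; apply: eq_bigr => a _; rewrite mxform_sumr.
have pairs_ge0 : 0 <= \sum_a \sum_a' mxform (u a - u a') (u a - u a') P.
  by apply: sumr_ge0 => a _; apply: sumr_ge0 => a' _; exact: pP.
have pairsE : \sum_a \sum_a' mxform (u a - u a') (u a - u a') P =
    (S *+ m + S *+ m) - (T + T).
  rewrite eT.
  under eq_bigr do under eq_bigr do
    rewrite mxformDl !mxformDr !mxformNl !mxformNr opprK.
  under eq_bigr do rewrite !big_split /= !sumrN.
  rewrite !big_split /= !sumrN [\sum_i \sum_j mxform (u j) (u i) P]exchange_big /=.
  have -> : \sum_(a < m) \sum_(a' < m) mxform (u a) (u a) P = S *+ m.
    by rewrite /S -sumrMnl; apply: eq_bigr => a _; rewrite sumr_const card_ord.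
  have -> : \sum_(a < m) \sum_(a' < m) mxform (u a') (u a') P = S *+ m.
    by rewrite sumr_const card_ord.
  set U := \sum_(i < m) _; rewrite opprD; ring.
have : 0 <= (S *+ m - T) *+ 2.
  by move: pairs_ge0; rewrite pairsE mulr2n opprD addrACA.
by rewrite pmulrn_lge0 // subr_ge0 mulr_natl.
Qed.

End Positive.

Section Tensor.
Variable K : comNzRingType.

Lemma big_mxtens m n (F : 'I_(m * n) -> K) :
  \sum_(k < m * n) F k = \sum_(a < m) \sum_(b < n) F (mxtens_index (a, b)).
Proof.
rewrite pair_big /= (reindex (@mxtens_index m n)) /=; last first.
  by exists (@mxtens_unindex m n) => k _; rewrite (mxtens_indexK, mxtens_unindexK).
by apply: eq_bigr => -[a b].
Qed.

Lemma tensmxDr m n p q (A : 'M[K]_(m, n)) (X Y : 'M[K]_(p, q)) :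
  A *t (X + Y) = A *t X + A *t Y.
Proof. by apply/matrixP=> i j; rewrite !mxE mulrDr. Qed.

Lemma tensmxZr m n p q (A : 'M[K]_(m, n)) c (X : 'M[K]_(p, q)) :
  A *t (c *: X) = c *: (A *t X).
Proof. by apply/matrixP=> i j; rewrite !mxE mulrCA. Qed.

Lemma tensmx11 m n : (1%:M : 'M[K]_m) *t (1%:M : 'M[K]_n) = 1%:M.
Proof.
apply/matrixP=> i j; case: (mxtens_indexP i) => a b; case: (mxtens_indexP j) => a' b'.
rewrite tensmxE !mxE (can_eq (@mxtens_indexK _ _)) xpair_eqE.
by case: (a == a'); case: (b == b'); rewrite /= ?mulr1 ?mulr0 ?mul0r.
Qed.

Lemma mxtrace_tens1 m n (Q : 'M[K]_n) : \tr ((1%:M : 'M[K]_m) *t Q) = m%:R * \tr Q.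
Proof.
rewrite /mxtrace big_mxtens.
under eq_bigr do under eq_bigr do rewrite tensmxE mxE eqxx mul1r.
by rewrite sumr_const card_ord mulr_natl.
Qed.

End Tensor.

Section PartialTrace.
Variable R : realType.
Local Notation C := R[i].

Definition tens_row m n (w : 'rV[C]_(m * n)) a : 'rV[C]_n :=
  \row_b w 0 (mxtens_index (a, b)).

Definition tens_embed m n a (y : 'rV[C]_n) : 'rV[C]_(m * n) :=
  \row_k (((@mxtens_unindex _ _ k).1 == a)%:R * y 0 (@mxtens_unindex _ _ k).2).

Definition ptraceA m n (P : 'M[C]_(m * n)) : 'M[C]_n :=
  \matrix_(b, b') \sum_(a < m) P (mxtens_index (a, b)) (mxtens_index (a, b')).

Lemma sum_tens_embed m n (w : 'rV[C]_(m * n)) :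
  w = \sum_(a < m) tens_embed a (tens_row w a).
Proof.
apply/rowP=> k; rewrite summxE; case: (mxtens_indexP k) => a b.
under eq_bigr do rewrite !mxE mxtens_indexK /=.
rewrite (bigD1 a) //= [X in _ + X]big1 => [|a' /negbTE ne].
  by rewrite eqxx mul1r addr0.
by rewrite eq_sym ne mul0r.
Qed.

Lemma mxform_tens1 m n (w : 'rV[C]_(m * n)) (Q : 'M[C]_n) :
  mxform w w ((1%:M : 'M[C]_m) *t Q) = \sum_a mxform (tens_row w a) (tens_row w a) Q.
Proof.
rewrite mxformE big_mxtens; apply: eq_bigr => a _.
rewrite mxformE; apply: eq_bigr => b _; rewrite big_mxtens.
under eq_bigr do under eq_bigr do rewrite tensmxE !mxE.
rewrite (bigD1 a) //= [X in _ + X]big1 => [|a' /negbTE ne]; last first.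
  by apply: big1 => b' _; rewrite eq_sym ne mulr0n mul0r mulr0 mul0r.
by rewrite addr0; apply: eq_bigr => b' _; rewrite !mxE eqxx mul1r.
Qed.

Lemma mxform_tens_embed m n a (y : 'rV[C]_n) (P : 'M[C]_(m * n)) :
  mxform (tens_embed a y) (tens_embed a y) P =
  \sum_b \sum_b' y 0 b * P (mxtens_index (a, b)) (mxtens_index (a, b')) * (y 0 b')^*.
Proof.
rewrite mxformE big_mxtens.
under eq_bigr do under eq_bigr do rewrite big_mxtens.
under eq_bigr do under eq_bigr do under eq_bigr do under eq_bigr do
  rewrite !mxE !mxtens_indexK /= rmorphM /= -mulrA (mulrC (_%:R)^*) !mulrA.
rewrite (bigD1 a) //= [X in _ + X]big1 => [|a' /negbTE ne]; last first.
  by apply: big1 => b _; apply: big1 => a'' _; apply: big1 => b' _; rewrite ne !mul0r.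
rewrite addr0; apply: eq_bigr => b _.
rewrite (bigD1 a) //= [X in _ + X]big1 => [|a' /negbTE ne]; last first.
  by apply: big1 => b' _; rewrite ne rmorph0 !mulr0.
by rewrite addr0; apply: eq_bigr => b' _; rewrite eqxx /= conjC1 !mulr1 mul1r.
Qed.

Lemma mxform_ptraceA m n (y : 'rV[C]_n) (P : 'M[C]_(m * n)) :
  mxform y y (ptraceA P) = \sum_a mxform (tens_embed a y) (tens_embed a y) P.
Proof.
under [RHS]eq_bigr do rewrite mxform_tens_embed.
rewrite mxformE [RHS]exchange_big /=; apply: eq_bigr => b _.
rewrite [RHS]exchange_big /=; apply: eq_bigr => b' _.
by rewrite mxE mulr_sumr mulr_suml.
Qed.

Lemma mxtrace_ptraceA m n (P : 'M[C]_(m * n)) : \tr (ptraceA P) = \tr P.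
Proof.
rewrite /mxtrace big_mxtens exchange_big /=; apply: eq_bigr => b _.
by rewrite mxE.
Qed.

Lemma ptraceA_herm m n (P : 'M[C]_(m * n)) :
  P \is hermsymmx -> ptraceA P \is hermsymmx.
Proof.
move=> /hermsymmx_adj hP; rewrite hermsymmx_adjE; apply/eqP/matrixP => b b'.
rewrite adjmxE !mxE rmorph_sum; apply: eq_bigr => a _.
by rewrite -[in RHS]hP adjmxE.
Qed.

Lemma psdmx_ptraceA m n (P : 'M[C]_(m * n)) : psdmx P -> psdmx (ptraceA P).
Proof.
move=> [hP pP]; split; first exact: ptraceA_herm.
move=> y; rewrite -[X in 0 <= X]/(mxform y y _) mxform_ptraceA.
by apply: sumr_ge0 => a _; exact: pP.
Qed.

Lemma loewner_le_ptraceA m n (P : 'M[C]_(m * n)) : psdmx P ->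
  loewner_le P (m%:R *: ((1%:M : 'M[C]_m) *t ptraceA P)).
Proof.
move=> pP; have [hP pP'] := pP; split.
  rewrite hermsymmx_adjE adjmxB adjmxZ adjmx_tens adjmx1.
  by rewrite (hermsymmx_adj (ptraceA_herm hP)) (hermsymmx_adj hP) rmorph_nat.
move=> w; rewrite -[X in 0 <= X]/(mxform w w _) mxformD mxformN mxformZ subr_ge0.
have := mxform_sum_le (fun a => tens_embed a (tens_row w a)) pP.
rewrite -sum_tens_embed => /le_trans; apply.
rewrite ler_wpM2l // mxform_tens1; apply: ler_sum => a _.
rewrite mxform_ptraceA (bigD1 a) //= lerDl.
by apply: sumr_ge0 => a' _; exact: pP'.
Qed.

End PartialTrace.

Section PositivePart.
Variable R : realType.
Local Notation C := R[i].

Lemma mxform_diag n (x e : 'rV[C]_n) :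
  mxform x x (diag_mx e) = \sum_i x 0 i * e 0 i * (x 0 i)^*.
Proof.
rewrite mxformE; apply: eq_bigr => i _.
rewrite (bigD1 i) //= [X in _ + X]big1 => [|j /negbTE ne]; last first.
  by rewrite !mxE eq_sym ne mulr0n mulr0 mul0r.
by rewrite addr0 !mxE eqxx mulr1n.
Qed.

Lemma psdmx_adj_diag n (U : 'M[C]_n) (e : 'rV[R]_n) : (forall i, 0 <= e 0 i) ->
  psdmx (adjmx U *m diag_mx (map_mx (fun r => r%:C%C) e) *m U).
Proof.
move=> e0; split.
  rewrite hermsymmx_adjE !adjmxM adjmxK mulmxA; apply/eqP; congr (_ *m _ *m _).
  apply/matrixP=> i j; rewrite adjmxE !mxE eq_sym.
  by case: eqP => [->|_]; rewrite ?mulr1n ?mulr0n ?rmorph0 // conj_realC.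
move=> w; rewrite -[X in 0 <= X]/(mxform w w _).
have -> : mxform w w (adjmx U *m diag_mx (map_mx (fun r => r%:C%C) e) *m U) =
    mxform (w *m adjmx U) (w *m adjmx U) (diag_mx (map_mx (fun r => r%:C%C) e)).
  by rewrite /mxform adjmxM adjmxK !mulmxA.
rewrite mxform_diag; apply: sumr_ge0 => i _; rewrite mxE mulrAC.
by apply: mulr_ge0; [exact: mulcJ_ge0 | rewrite mxE ler0c].
Qed.

Section Spectral.
Variables (n : nat) (X : 'M[C]_n).
Local Notation U := (spectralmx X).
Local Notation d := (spectral_diag X).

Definition posPart_diag : 'rV[R]_n := \row_i Num.max (complex.Re (d 0 i)) 0.

Lemma invmx_spectral : invmx U = adjmx U.
Proof. by rewrite invmx_unitary ?spectral_unitarymx // /adjmx map_trmx. Qed.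

Lemma posPartE :
  posPart X = adjmx U *m diag_mx (map_mx (fun r => r%:C%C) posPart_diag) *m U.
Proof.
rewrite /posPart invmx_spectral; congr (_ *m diag_mx _ *m _).
by apply/matrixP => i j; rewrite !mxE (ord1 i).
Qed.

Lemma psdmx_posPart : psdmx (posPart X).
Proof. by rewrite posPartE; apply: psdmx_adj_diag => i; rewrite mxE le_max lexx orbT. Qed.

Lemma trR_posPart : trR (posPart X) = \sum_i posPart_diag 0 i.
Proof.
rewrite /trR posPartE mxtrace_mulC mulmxA -invmx_spectral mulmxV ?spectral_unit //.
rewrite mul1mx mxtrace_diag; under eq_bigr do rewrite mxE.
by rewrite -rmorph_sum.
Qed.

Lemma posPart_le_trR : loewner_le (posPart X) ((trR (posPart X))%:C%C *: 1%:M).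
Proof.
set s := trR (posPart X).
have -> : s%:C%C *: (1%:M : 'M[C]_n) =
    adjmx U *m diag_mx (map_mx (fun r => r%:C%C) (const_mx s)) *m U.
  have -> : diag_mx (map_mx (fun r => r%:C%C) (const_mx s) : 'rV[C]_n) = s%:C%C *: 1%:M.
    by apply/matrixP=> i j; rewrite !mxE mulr_natr.
  by rewrite -invmx_spectral -scalemxAr mulmx1 -scalemxAl mulVmx ?spectral_unit.
rewrite /loewner_le posPartE -mulmxBl -mulmxBr.
have -> : diag_mx (map_mx (fun r => r%:C%C) (const_mx s)) -
          diag_mx (map_mx (fun r => r%:C%C) posPart_diag) =
          diag_mx (map_mx (fun r => r%:C%C) (\row_i (s - posPart_diag 0 i)) : 'rV[C]_n).
  apply/matrixP=> i j; rewrite !mxE.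
  by case: (i == j); rewrite ?mulr1n ?mulr0n ?subr0 ?rmorphB.
apply: psdmx_adj_diag => i; rewrite !mxE subr_ge0 /s trR_posPart.
apply: (@le_trans _ _ (posPart_diag 0 i)); first by rewrite mxE.
rewrite (bigD1 i) //= lerDl.
by apply: sumr_ge0 => j _; rewrite mxE le_max lexx orbT.
Qed.

Hypothesis hX : X \is hermsymmx.

Lemma loewner_le_posPart : loewner_le X (posPart X).
Proof.
have decX : X = adjmx U *m diag_mx d *m U.
  by rewrite -invmx_spectral; apply/orthomx_spectralP; exact: hermitian_normalmx.
have d_real i : d 0 i = (complex.Re (d 0 i))%:C%C.
  by have /mxOverP/(_ 0 i)/RRe_real -> := hermitian_spectral_diag_real hX.
rewrite /loewner_le [in X in _ - X]decX posPartE -mulmxBl -mulmxBr -linearB /=.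
have -> : map_mx (fun r => r%:C%C) posPart_diag - d =
          map_mx (fun r => r%:C%C) (\row_i (posPart_diag 0 i - complex.Re (d 0 i))).
  by apply/matrixP=> i j; rewrite (ord1 i) !mxE (d_real j) /= rmorphB.
by apply: psdmx_adj_diag => i; rewrite !mxE subr_ge0 le_max lexx.
Qed.

End Spectral.

(* [Q = d_A tr_A {X}_+] when [d_A <= d_B] and [Q = (tr {X}_+) 1] otherwise. *)
Lemma posPart_le_tens1 m n (X : 'M[C]_(m * n)) : exists Q : 'M[C]_n,
  [/\ psdmx Q, trR Q <= (minn m n)%:R * trR (posPart X)
    & loewner_le (posPart X) ((1%:M : 'M[C]_m) *t Q)].
Proof.
have pP := psdmx_posPart X.
case: leqP => _. (* [leqP] also substitutes for [minn m n] *)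
- exists ((m%:R : R)%:C%C *: ptraceA (posPart X)); split.
  + exact: psdmxZ (ler0n _ _) (psdmx_ptraceA pP).
  + by rewrite trRZ /trR mxtrace_ptraceA.
  + by rewrite tensmxZr (rmorph_nat (real_complex R)); exact: loewner_le_ptraceA.
- exists ((trR (posPart X))%:C%C *: 1%:M); split.
  + exact: psdmxZ (psdmx_trR_ge0 pP) (psdmx1 R n).
  + by rewrite trRZ trR1 mulrC.
  + by rewrite tensmxZr tensmx11; exact: posPart_le_trR.
Qed.

End PositivePart.

Section MinEntropy.
Variable R : realType.
Local Notation C := R[i].

Definition Hmin_feasible m n (rho : 'M[C]_(m * n)) (sigma : 'M[C]_n) (l : R) :=
  loewner_le rho (((2 : R) `^ (- l))%:C%C *: ((1%:M : 'M[C]_m) *t sigma)).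

Lemma Hmin_ge m n (rho : 'M[C]_(m * n)) sigma l :
  normalized sigma -> Hmin_feasible rho sigma l -> (l%:E <= Hmin m n rho)%E.
Proof.
move=> ns fl; apply: le_trans (ereal_sup_ubound _); last by exists sigma.
by apply: ereal_sup_ubound; exists l.
Qed.

Lemma Hmin_le m n (rho : 'M[C]_(m * n)) x :
  (forall sigma l, normalized sigma -> Hmin_feasible rho sigma l -> l <= x) ->
  (Hmin m n rho <= x%:E)%E.
Proof.
move=> ub; apply: ge_ereal_sup => _ [sigma ns <-].
by apply: ge_ereal_sup => _ [l fl <-]; rewrite lee_fin; exact: ub fl.
Qed.

Lemma ln2_gt0 : 0 < ln (2 : R).
Proof. by apply: ln_gt0; rewrite ltr1n. Qed.

Lemma powR2_ln (y : R) : 0 < y -> (2 : R) `^ (ln y / ln 2) = y.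
Proof.
move=> y0; rewrite /powR pnatr_eq0 /= divfK ?gt_eqF ?ln2_gt0 //.
by rewrite lnK // posrE.
Qed.

Lemma Hmin_feasible_ln m n (rho : 'M[C]_(m * n)) sigma y : 0 < y ->
  loewner_le rho (y%:C%C *: ((1%:M : 'M[C]_m) *t sigma)) ->
  Hmin_feasible rho sigma (- (ln y / ln 2)).
Proof. by move=> y0; rewrite /Hmin_feasible opprK powR2_ln. Qed.

Lemma trR_le_Hmin_feasible m n (rho : 'M[C]_(m * n)) sigma l :
  normalized sigma -> Hmin_feasible rho sigma l -> trR rho <= (2 : R) `^ (- l) * m%:R.
Proof.
move=> [_ tr1] fl; have := psdmx_trR_ge0 fl.
rewrite trRB trRZ subr_ge0 /trR mxtrace_tens1 tr1 mulr1.
by rewrite -(rmorph_nat (real_complex R)).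
Qed.

Lemma Hmin_feasible_le m n (rho : 'M[C]_(m * n)) sigma l : (0 < m)%N -> 0 < trR rho ->
  normalized sigma -> Hmin_feasible rho sigma l -> l <= - (ln (trR rho / m%:R) / ln 2).
Proof.
move=> m0 t0 ns fl; have := trR_le_Hmin_feasible ns fl.
rewrite -ler_pdivrMr ?ltr0n // => le_t.
have : ln (trR rho / m%:R) <= ln ((2 : R) `^ (- l)).
  by rewrite ler_ln // posrE ?divr_gt0 ?ltr0n ?powR_gt0.
rewrite ln_powR => le_ln.
rewrite -mulNr ler_pdivlMr ?ln2_gt0 //; nra.
Qed.

Lemma dims_gt0 m n (rho : 'M[C]_(m * n)) : 0 < trR rho -> (0 < m)%N /\ (0 < n)%N.
Proof.
move=> t0; case: (ltnP 0 (m * n)) => [|mn0]; first by rewrite muln_gt0 => /andP.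
move: t0; rewrite /trR /mxtrace big1 ?lt_irreflexive // => i _.
by have := ltn_ord i; rewrite ltnNge (leq_trans mn0).
Qed.

(* Pad [M] with a multiple of the identity up to trace [s] and normalize. *)
Lemma loewner_le_tens_state m n (rho : 'M[C]_(m * n)) (M : 'M[C]_n) s :
  (0 < n)%N -> 0 < s -> psdmx M -> trR M <= s ->
  loewner_le rho ((1%:M : 'M[C]_m) *t M) ->
  exists2 sigma, normalized sigma & loewner_le rho (s%:C%C *: (1%:M *t sigma)).
Proof.
move=> n0 s0 pM trM le_rho.
set r := (s - trR M) / n%:R.
have r0 : 0 <= r by rewrite divr_ge0 ?ler0n // subr_ge0.
set M' := M + r%:C%C *: 1%:M.
have pM' : psdmx M' := psdmxD pM (psdmxZ r0 (psdmx1 R n)).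
have trM' : \tr M' = s%:C%C.
  rewrite mxtraceD mxtraceZ (psdmx_trR pM) mxtrace1.
  rewrite -(rmorph_nat (real_complex R)) -rmorphM -rmorphD /r; congr (_%:C%C).
  by field; rewrite pnatr_eq0 -lt0n.
exists ((s^-1)%:C%C *: M').
  split; first by apply: psdmxZ; rewrite ?invr_ge0 ?ltW.
  by rewrite mxtraceZ trM' -rmorphM mulVf ?gt_eqF.
rewrite tensmxZr scalerA -rmorphM divff ?gt_eqF // scale1r.
apply: loewner_le_trans le_rho _.
rewrite /loewner_le tensmxDr addrAC subrr add0r tensmxZr tensmx11.
exact: psdmxZ r0 (psdmx1 R _).
Qed.

Lemma Hmin_finite m n (rho : 'M[C]_(m * n)) :
  subnormalized rho -> exists h, Hmin m n rho = h%:E.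
Proof.
move=> [pr [t0 _]]; have [m0 n0] := dims_gt0 t0.
set p := trR (posPart rho).
have p0 : 0 <= p := psdmx_trR_ge0 (psdmx_posPart rho).
have s0 : 0 < 1 + p * n%:R by rewrite ltr_pwDl // mulr_ge0 ?ler0n.
have [sigma ns le_rho] :
    exists2 sigma, normalized sigma & loewner_le rho ((1 + p * n%:R)%:C%C *: (1%:M *t sigma)).
  apply: (loewner_le_tens_state (M := p%:C%C *: 1%:M) n0 s0).
  - exact: psdmxZ p0 (psdmx1 R n).
  - by rewrite trRZ trR1 lerDr ler01.
  - rewrite tensmxZr tensmx11; apply: loewner_le_trans (loewner_le_posPart pr.1) _.
    exact: posPart_le_trR.
have := Hmin_ge ns (Hmin_feasible_ln s0 le_rho).
have := Hmin_le (fun sigma' l ns' fl => Hmin_feasible_le m0 t0 ns' fl).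
by case: (Hmin m n rho) => [h| |] // _ _; exists h.
Qed.

Lemma log2_addr_le (c k t M : R) : 0 < c -> 0 <= k -> 0 < t -> t <= c * M ->
  (ln (c + k) - ln c) / ln 2 <= M * k / (ln 2 * t).
Proof.
move=> c0 k0 t0 tcM.
have kc0 : 0 <= k / c by rewrite divr_ge0 // ltW.
have lnE : ln (c + k) = ln c + ln (1 + k / c).
  have kc1 : 0 < 1 + k / c by lra.
  rewrite -lnM ?posrE //.
  by rewrite mulrDr mulr1 mulrCA divff ?gt_eqF // mulr1.
rewrite lnE addrAC subrr add0r.
have ln_le : ln (1 + k / c) <= k / c.
  by apply: le_ln1Dx; apply: (@lt_le_trans _ _ 0); rewrite ?ltrN10.
have kc_le : k / c <= M * k / t.
  rewrite ler_pdivrMr // mulrAC ler_pdivlMr //.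
  have : k * t <= k * (c * M) by exact: ler_wpM2l.
  lra.
rewrite invfM mulrA [X in _ <= X]mulrAC ler_pM2r ?invr_gt0 ?ln2_gt0 //.
exact: le_trans ln_le kc_le.
Qed.

Definition Hmin_bound m n (rho tau : 'M[C]_(m * n)) : R :=
  (m * minn m n)%:R * gen_trace_dist rho tau / (ln 2 * Num.min (trR rho) (trR tau)).

Lemma Hmin_boundC m n (rho tau : 'M[C]_(m * n)) : Hmin_bound rho tau = Hmin_bound tau rho.
Proof. by rewrite /Hmin_bound /gen_trace_dist maxC minC. Qed.

Lemma Hmin_feasible_transfer m n (rho tau : 'M[C]_(m * n)) sigma l :
  subnormalized rho -> subnormalized tau -> normalized sigma -> Hmin_feasible tau sigma l ->
  exists sigma' l',
    [/\ normalized sigma', Hmin_feasible rho sigma' l' & l - Hmin_bound rho tau <= l'].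
Proof.
move=> [pr [r0 _]] [pt [t0 _]] ns fl; have [m0 n0] := dims_gt0 r0.
have tau_le := trR_le_Hmin_feasible ns fl.
move: fl; rewrite /Hmin_feasible; set c := (2 : R) `^ (- l) => fl.
have c0 : 0 < c by apply: powR_gt0.
have [Q [pQ trQ PQ]] := posPart_le_tens1 (rho - tau).
set δ := gen_trace_dist rho tau; set k := (minn m n)%:R * δ.
have trQk : trR Q <= k.
  by apply: le_trans trQ _; rewrite ler_wpM2l ?ler0n // le_max lexx.
have k0 : 0 <= k := le_trans (psdmx_trR_ge0 pQ) trQk.
have ck0 : 0 < c + k by lra.
have hX : rho - tau \is hermsymmx.
  by rewrite hermsymmx_adjE adjmxB (hermsymmx_adj pr.1) (hermsymmx_adj pt.1).
have [sigma' ns' le_rho] :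
    exists2 sigma', normalized sigma' & loewner_le rho ((c + k)%:C%C *: (1%:M *t sigma')).
  apply: (loewner_le_tens_state (M := c%:C%C *: sigma + Q) n0 ck0).
  - exact: psdmxD (psdmxZ (ltW c0) ns.1) pQ.
  - by rewrite trRD trRZ normalized_trR // mulr1 lerD2l.
  - have -> : rho = tau + (rho - tau) by rewrite addrC subrK.
    rewrite tensmxDr tensmxZr.
    exact: loewner_leD fl (loewner_le_trans (loewner_le_posPart hX) PQ).
exists sigma', (- (ln (c + k) / ln 2)); split; [exact: ns' | exact: Hmin_feasible_ln ck0 le_rho |].
have lc : l = - (ln c / ln 2) by rewrite /c ln_powR mulfK ?gt_eqF ?ln2_gt0 // opprK.
set t := Num.min (trR rho) (trR tau).
have t_gt0 : 0 < t by rewrite lt_min r0 t0.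
have t_le : t <= c * m%:R by rewrite ge_min tau_le orbT.
have := log2_addr_le c0 k0 t_gt0 t_le.
rewrite /Hmin_bound -/δ -/t /k natrM !mulrA {1}lc mulrBl; lra.
Qed.

Lemma Hmin_le_add m n (rho tau : 'M[C]_(m * n)) hr ht :
  subnormalized rho -> subnormalized tau ->
  Hmin m n rho = hr%:E -> Hmin m n tau = ht%:E -> ht <= hr + Hmin_bound rho tau.
Proof.
move=> sr st Er Et; rewrite -lee_fin -Et; apply: Hmin_le => sigma l ns fl.
have [sigma' [l' [ns' fl' le_l]]] := Hmin_feasible_transfer sr st ns fl.
by have := Hmin_ge ns' fl'; rewrite Er lee_fin; lra.
Qed.

End MinEntropy.

Theorem lemma11 (R : realType) (dA dB : nat) (rho tau : 'M[R[i]]_(dA * dB)) :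
  subnormalized rho -> subnormalized tau ->
  (`| Hmin dA dB rho - Hmin dA dB tau |
     <= ((dA * minn dA dB)%:R * gen_trace_dist rho tau
         / (ln 2 * Num.min (trR rho) (trR tau)))%:E)%E.
Proof.
move=> sr st.
have [hr Er] := Hmin_finite sr; have [ht Et] := Hmin_finite st.
have le_tr := Hmin_le_add sr st Er Et.
have := Hmin_le_add st sr Et Er; rewrite -Hmin_boundC => le_rt.
rewrite Er Et -EFinB abse_EFin lee_fin ler_distl -/(Hmin_bound rho tau).
by apply/andP; split; lra.
Qed.
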